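(* There is an absolute constant $C$ such that the following holds. Let $f\ge 1$ and let $G$ be a simple graph on $n>10f$ vertices and $m$ edges, with some ordering of its edges, that admits an $f$-MFD blocking set. Then $m\le C\, fn\log(n/f)$. In particular, for every simple $n$-vertex graph $G$ with $n>10f$ and every edge ordering, the output $H$ of the greedy algorithm $\mathsf{FTGreedyMFDCertificate}(G,f)$ has at most $C\, fn\log(n/f)$ edges.
   Context: For a graph $G=(V,E)$ and $F\subseteq V\cup E$, $G-F$ is obtained by deleting the vertices of $F\cap V$ (with incident edges) and the edges of $F\cap E$. $F$ damages an edge $e$ if $e$ is not an edge of $G-F$. For $v\in V$ let $\deg_G(v,F)=|\{u\in N_G(v): u\in F\text{ or }\{u,v\}\in F\}|$ and $\deg_G(F)=\max_{v\in V\setminus F}\deg_G(v,F)$. Given ordered edges $e_1,\dots,e_m$ with $e_i=\{u_i,v_i\}$, let $G_{<i}=(V,\{e_1,\dots,e_{i-1}\})$. An $f$-MFD blocking set for $G$ is a collection $\{(e_i,F_i)\}_{i=1}^m$ with $F_i\subseteq V\cup E$ such that (1) $F_i$ does not damage $e_i$, (2) $u_i,v_i$ are disconnected in $G_{<i}-F_i$, and (3) $\deg_G(F_i)\le f$. The algorithm $\mathsf{FTGreedyMFDCertificate}(G,f)$: start with $H=(V,\emptyset)$; for $i=1,\dots,m$, if there exists $F\subseteq V\cup E$ with $\deg_G(F)\le f$ that does not damage $e_i$ such that $u_i$ and $v_i$ are disconnected in $H-F$, add $e_i$ to $H$; return $H$. Logarithms are base 2. *)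

From Stdlib Require Import Reals.
From mathcomp Require Import all_boot.
Set Implicit Arguments. Unset Strict Implicit. Unset Printing Implicit Defensive.

(* A simple graph with an edge ordering on vertex set T (n = #|T|):
   the ordered list of edges es = [e_1; ...; e_m], each edge a 2-subset of T,
   without repetition. *)
Definition edges_ok (T : finType) (es : seq {set T}) : bool :=
  uniq es && all (fun e : {set T} => #|e| == 2) es.

(* F ⊆ V ∪ E, represented as (vertex part, edge part). *)
Definition Fset (T : finType) := ({set T} * {set {set T}})%type.

Definition validF (T : finType) (es : seq {set T}) (F : Fset T) : bool :=
  F.2 \subset [set e in es].

(* F damages e iff e is not an edge of G - F. *)
Definition damages (T : finType) (F : Fset T) (e : {set T}) : bool :=
  [exists x in e, x \in F.1] || (e \in F.2).

Definition degv (T : finType) (es : seq {set T}) (F : Fset T) (v : T) : nat :=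
  #|[set u | [&& u != v, [set u; v] \in es &
                 (u \in F.1) || ([set u; v] \in F.2)]]|.

Definition degF_le (T : finType) (es : seq {set T}) (F : Fset T) (f : nat) : bool :=
  [forall v, (v \notin F.1) ==> (degv es F v <= f)].

Definition adjF (T : finType) (H : seq {set T}) (F : Fset T) : rel T :=
  fun x y => [&& x \notin F.1, y \notin F.1, x != y,
                 [set x; y] \in H & [set x; y] \notin F.2].

Definition disconn (T : finType) (H : seq {set T}) (F : Fset T) (e : {set T}) : bool :=
  [forall u in e, forall v in e, (u != v) ==> ~~ connect (adjF H F) u v].

(* f-MFD blocking set for the ordered graph es: the i-th entry (0-indexed)
   is (e_i, Fs i), and G_{<i} has edge list take i es. *)
Definition has_MFD_blocking_set (T : finType) (es : seq {set T}) (f : nat) : Prop :=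
  exists Fs : nat -> Fset T,
    forall i, (i < size es)%N ->
      let e := nth set0 es i in
      [/\ validF es (Fs i), ~~ damages (Fs i) e,
          disconn (take i es) (Fs i) e & degF_le es (Fs i) f].

Definition greedy_step (T : finType) (es : seq {set T}) (f : nat)
    (H : seq {set T}) (e : {set T}) : seq {set T} :=
  if [exists F : Fset T,
        [&& validF es F, degF_le es F f, ~~ damages F e & disconn H F e]]
  then rcons H e else H.

Definition FTGreedyMFDCertificate (T : finType) (es : seq {set T}) (f : nat)
  : seq {set T} := foldl (greedy_step es f) [::] es.

Definition log2 (x : R) : R := Rdiv (ln x) (ln 2).

From Stdlib Require Import Reals Lra.
From mathcomp Require Import all_boot zify.
Set Implicit Arguments. Unset Strict Implicit. Unset Printing Implicit Defensive.

(* If F_i blocks e_i = {u, v}, the components A of u and B of v in G_{<i} - F_i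
   are disjoint, and every vertex of A has at most f neighbours in G_{<i}
   outside A (each such neighbour, or the edge to it, lies in F_i); likewise
   for B.  Edge sequences in which every edge is cut in this way by its
   predecessors are sparse.  Remove the last edge and split the vertex set W
   into the smaller side S = W ∩ A (say) and D = W \ A: edges inside S and
   inside D are counted recursively, and the at most f|S| edges between S
   and D are charged to S.  Since |S| <= |W|/2, this gives
   m < (f (t + 1) + 1) |W| whenever |W| <= f 2^t, i.e. m = O(f n log(n/f)).
   The greedy certificate is such a sequence by the very test that admits
   each of its edges. *)

Lemma card_bigcup_le (I U : finType) (P : {pred I}) (F : I -> {set U}) :
  #|\bigcup_(i in P) F i| <= \sum_(i in P) #|F i|.
Proof.
elim/big_rec2: _ => [|i n X _ IH]; first by rewrite cards0.
by apply: leq_trans (leq_card_setU _ _).1 _; rewrite leq_add2l.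
Qed.

Lemma edges_ok_subseq (T : finType) (s s' : seq {set T}) :
  subseq s' s -> edges_ok s -> edges_ok s'.
Proof.
move=> ss /andP [us al]; rewrite /edges_ok (subseq_uniq ss us).
by apply/allP => e /(mem_subseq ss) /(allP al).
Qed.

Lemma size_edges_le_bin2 (T : finType) (W : {set T}) (s : seq {set T}) :
  edges_ok s -> all (fun e : {set T} => e \subset W) s -> size s <= 'C(#|W|, 2).
Proof.
move=> /andP [us al2] alW; rewrite -(card_uniqP us) -cards_draws.
apply/subset_leq_card/subsetP => e es; rewrite inE.
by rewrite (allP alW e es) (allP al2 e es).
Qed.

Section Separation.
Variables (T : finType) (f : nat).
Implicit Types (s : seq {set T}) (A B W X : {set T}) (e : {set T}).

Definition out_nbrs s A (a : T) : {set T} :=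
  [set x | x \notin A & [set a; x] \in s].

Definition low_outdeg s A := forall a, a \in A -> #|out_nbrs s A a| <= f.

Definition separated s e := exists A B (u v : T),
  [/\ e = [set u; v], u \in A, v \in B, [disjoint A & B] &
      low_outdeg s A /\ low_outdeg s B].

Definition separated_seq s :=
  forall i, i < size s -> separated (take i s) (nth set0 s i).

Lemma low_outdeg_sub s s' A :
  {subset s' <= s} -> low_outdeg s A -> low_outdeg s' A.
Proof.
move=> ss lowA a aA; apply: leq_trans (lowA a aA).
by apply/subset_leq_card/subsetP => x; rewrite !inE => /andP [-> /ss].
Qed.

Lemma separated_sub s s' e : {subset s' <= s} -> separated s e -> separated s' e.
Proof.
move=> ss [A [B [u [v [-> uA vB dAB [lowA lowB]]]]]].
by exists A, B, u, v; split => //; split; apply: low_outdeg_sub ss _.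
Qed.

Lemma separated_seq_rcons s e :
  separated_seq (rcons s e) <-> separated_seq s /\ separated s e.
Proof.
have prefix i : i < size s ->
    take i (rcons s e) = take i s /\ nth set0 (rcons s e) i = nth set0 s i.
  by move=> lt_is; rewrite nth_rcons lt_is -cats1 takel_cat // ltnW.
have last_edge : take (size s) (rcons s e) = s /\ nth set0 (rcons s e) (size s) = e.
  by rewrite nth_rcons ltnn eqxx -cats1 take_size_cat.
rewrite /separated_seq size_rcons; split=> [sep | [sep sep_e] i].
  split=> [i lt_is|]; last by have := sep _ (ltnSn _); case: last_edge => -> ->.
  by have := sep i (ltnW lt_is); case: (prefix i lt_is) => -> ->.
rewrite ltnS leq_eqVlt => /orP [/eqP -> | lt_is]; first by case: last_edge => -> ->.
by case: (prefix i lt_is) => -> ->; apply: sep.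
Qed.

Lemma separated_seq_filter (P : pred {set T}) s :
  separated_seq s -> separated_seq (filter P s).
Proof.
elim/last_ind: s => [//|s e IH] /separated_seq_rcons [sep sep_e].
rewrite filter_rcons; case: (P e); last exact: IH.
apply/separated_seq_rcons; split; first exact: IH.
by apply: separated_sub sep_e => x; rewrite mem_filter => /andP [].
Qed.

Lemma exists_small_side s e W : separated s e -> e \subset W ->
  exists X (x y : T), [/\ e = [set x; y], x \in W :&: X, y \in W :\: X,
                          2 * #|W :&: X| <= #|W| & low_outdeg s X].
Proof.
move=> [A [B [u [v [-> uA vB dAB [lowA lowB]]]]]] sW.
have uW : u \in W by apply: (subsetP sW); rewrite !inE eqxx.
have vW : v \in W by apply: (subsetP sW); rewrite !inE eqxx orbT.
have sum_le : #|W :&: A| + #|W :&: B| <= #|W|.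
  rewrite -(cardsID A W) leq_add2l; apply/subset_leq_card/subsetP => x.
  by rewrite !inE => /andP [-> /(disjointFl dAB) ->].
have [le_AB | /ltnW le_BA] := leqP #|W :&: A| #|W :&: B|.
    by exists A, u, v; split; rewrite ?inE ?uW ?vW ?uA ?(disjointFl dAB vB) //; lia.
exists B, v, u; split; rewrite ?inE ?uW ?vW ?vB ?(disjointFr dAB uA) //; last lia.
by rewrite setUC.
Qed.

Lemma two_set_eq e (x y : T) :
  #|e| == 2 -> x \in e -> y \in e -> x != y -> e = [set x; y].
Proof.
move=> /eqP card_e xe ye xy; apply/eqP; rewrite eq_sym eqEcard card_e cards2 xy andbT.
by apply/subsetP => z; rewrite !inE => /orP [] /eqP ->.
Qed.

Lemma count_crossing_le s W X :
  edges_ok s -> all (fun e => e \subset W) s -> low_outdeg s X ->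
  count (fun e => ~~ (e \subset W :&: X) && ~~ (e \subset W :\: X)) s
    <= f * #|W :&: X|.
Proof.
move=> /andP [us al2] alW lowX.
rewrite -size_filter -(card_uniqP (filter_uniq _ us)).
pose crossing := \bigcup_(a in W :&: X) [set [set a; x] | x in out_nbrs s X a].
apply: (@leq_trans #|crossing|).
  apply/subset_leq_card/subsetP => e.
  rewrite mem_filter => /andP [/andP [nWX nWD] es].
  have eW := allP alW e es.
  have [x xe xWX] : exists2 x, x \in e & x \in W :&: X.
    move: nWD; rewrite -setD_eq0 => /set0Pn [x /setDP [xe]].
    rewrite !inE (subsetP eW) // andbT negbK => xX.
    by exists x; rewrite // inE xX (subsetP eW).
  have [y ye yX] : exists2 y, y \in e & y \notin X.
    move: nWX; rewrite -setD_eq0 => /set0Pn [y /setDP [ye]].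
    by rewrite !inE (subsetP eW) //=; exists y.
  have xy : x != y by apply: contraNneq yX => <-; case/setIP: xWX.
  have e_xy := two_set_eq (allP al2 e es) xe ye xy.
  apply/bigcupP; exists x => //; apply/imsetP; exists y => //.
  by rewrite inE yX -e_xy.
rewrite /crossing; apply: leq_trans (card_bigcup_le _ _) _.
rewrite mulnC -sum_nat_const; apply: leq_sum => a /setIP [_ aX].
exact: leq_trans (leq_imset_card _ _) (lowX a aX).
Qed.

Lemma size_separated_seq t W s :
  0 < #|W| -> #|W| <= f * 2 ^ t ->
  edges_ok s -> all (fun e => e \subset W) s -> separated_seq s ->
  size s < (f * t.+1).+1 * #|W|.
Proof.
have [N] := ubnP #|W|; elim: N => // N IH in t W s *.
rewrite ltnS => leWN W0 leWt ok_s sW sep_s.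
case: t leWt => [|t] leWt.
  have := size_edges_le_bin2 ok_s sW; rewrite bin2 expn0 muln1 in leWt *; nia.
case/lastP: s ok_s sW sep_s => [|s e] ok_s sW sep_s; first by rewrite muln_gt0.
move: sep_s => /separated_seq_rcons [sep_s sep_e].
move: sW; rewrite all_rcons => /andP [eW sW].
have {}ok_s : edges_ok s := edges_ok_subseq (subseq_rcons s e) ok_s.
have [X [x [y [_ xS yD small lowX]]]] := exists_small_side sep_e eW.
set S := W :&: X in xS small lowX *; set D := W :\: X in yD *.
have card_SD : #|S| + #|D| = #|W| := cardsID X W.
have S0 : 0 < #|S| by apply/card_gt0P; exists x.
have D0 : 0 < #|D| by apply/card_gt0P; exists y.
pose inside (Y : {set T}) (e : {set T}) := e \subset Y.
have IH_on (Y : {set T}) t' : #|Y| < N -> 0 < #|Y| -> #|Y| <= f * 2 ^ t' ->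
    count (inside Y) s < (f * t'.+1).+1 * #|Y|.
  move=> ltYN Y0 leYt; rewrite -size_filter; apply: IH => //.
  - exact: edges_ok_subseq (filter_subseq _ s) ok_s.
  - by apply/allP => e'; rewrite mem_filter => /andP [].
  - exact: separated_seq_filter.
have leSt : #|S| <= f * 2 ^ t by rewrite expnS in leWt; nia.
have sizeS := IH_on S t ltac:(lia) S0 leSt.
have sizeD := IH_on D t.+1 ltac:(lia) D0 ltac:(lia).
have cross : count (fun c => ~~ inside S c && ~~ inside D c) s <= f * #|S|.
  exact: count_crossing_le ok_s sW lowX.
have size_split : size s <= count (inside S) s + count (inside D) s +
    count (fun c => ~~ inside S c && ~~ inside D c) s.
  have -> : count (fun c => ~~ inside S c && ~~ inside D c) s =
            count (predC (predU (inside S) (inside D))) s.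
    by apply: eq_count => c; rewrite /= negb_or.
  rewrite -(count_predC (predU (inside S) (inside D))) leq_add2r.
  by rewrite -count_predUI leq_addr.
rewrite size_rcons; nia.
Qed.
End Separation.

Section Cuts.
Variables (T : finType) (f : nat) (es H : seq {set T}) (F : Fset T).
Hypotheses (sub_H : {subset H <= es}) (degF : degF_le es F f).

Lemma adjF_sym : symmetric (adjF H F).
Proof.
by move=> a b; rewrite /adjF setUC eq_sym; case: (a \in F.1); case: (b \in F.1).
Qed.

Definition component (u : T) : {set T} :=
  [set z | z \notin F.1 & connect (adjF H F) u z].

Lemma low_outdeg_component u : low_outdeg f H (component u).
Proof.
move=> a; rewrite inE => /andP [aF ua].
have deg_a : degv es F a <= f by move/forallP/(_ a)/implyP/(_ aF): degF.
apply: leq_trans deg_a; apply/subset_leq_card/subsetP => z.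
rewrite !inE negb_and negbK => /andP [z_out az].
have za : z != a by apply: contraTneq z_out => ->; rewrite (negbTE aF) ua.
rewrite za setUC (sub_H az) /=; apply: contraTT z_out => /norP [zF azF].
rewrite (negbTE zF) negbK; apply: connect_trans ua (connect1 _).
by rewrite /adjF aF zF eq_sym za az.
Qed.

Lemma separated_of_cut (e : {set T}) :
  #|e| == 2 -> ~~ damages F e -> disconn H F e -> separated f H e.
Proof.
move=> /cards2P [u [v [uv ->]]].
rewrite /damages negb_or => /andP [/existsPn undamaged _].
have [uF vF] : u \notin F.1 /\ v \notin F.1.
  by split; [move: (undamaged u) | move: (undamaged v)]; rewrite !inE !eqxx ?orbT.
move=> /forall_inP/(_ u (set21 u v))/forall_inP/(_ v (set22 u v))/implyP/(_ uv) disc.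
exists (component u), (component v), u, v; split => //.
- by rewrite inE uF connect0.
- by rewrite inE vF connect0.
- apply/pred0P => z /=; rewrite !inE.
  apply/negP => /andP [/andP [_ uz] /andP [_ vz]]; move/negP: disc; apply.
  by apply: connect_trans uz _; rewrite (sym_connect_sym adjF_sym).
- by split; apply: low_outdeg_component.
Qed.

End Cuts.

Lemma separated_seq_blocking (T : finType) (es : seq {set T}) f :
  edges_ok es -> has_MFD_blocking_set es f -> separated_seq f es.
Proof.
move=> /andP [_ al2] [Fs blocking] i lt_i.
have [_ undamaged disc degF] := blocking i lt_i.
apply: (separated_of_cut _ degF) => //; first exact: mem_take.
exact: allP al2 _ (mem_nth set0 lt_i).
Qed.

Section Greedy.
Variables (T : finType) (es : seq {set T}) (f : nat).

Lemma greedy_subseq s : subseq (foldl (greedy_step es f) [::] s) s.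
Proof.
elim/last_ind: s => [//|s e IH]; rewrite foldl_rcons /greedy_step.
case: ifP => _; last exact: subseq_trans IH (subseq_rcons s e).
by rewrite -!cats1 cat_subseq.
Qed.

Lemma greedy_separated s : edges_ok es -> {subset s <= es} ->
  separated_seq f (foldl (greedy_step es f) [::] s).
Proof.
move=> /andP [_ al2]; elim/last_ind: s => [_ i //|s e IH] sub_es.
have sub_s : {subset s <= es}.
  by move=> x xs; apply: sub_es; rewrite mem_rcons inE xs orbT.
rewrite foldl_rcons /greedy_step.
case: ifP => [/existsP [F /and4P [_ degF undamaged disc]] | _]; last exact: IH.
apply/separated_seq_rcons; split; first exact: IH.
apply: (separated_of_cut _ degF) => //.
  by move=> x /(mem_subseq (greedy_subseq s)); apply: sub_s.
by apply: (allP al2); apply: sub_es; rewrite mem_rcons mem_head.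
Qed.

End Greedy.

Lemma exists_pow2_bracket n f : 0 < f -> 8 * f <= n ->
  exists2 k, 3 <= k & f * 2 ^ k <= n < f * 2 ^ k.+1.
Proof.
move=> f0 large; have q0 : 0 < n %/ f by rewrite divn_gt0 //; lia.
have /andP [lo hi] := trunc_log_bounds (isT : 1 < 2) q0.
set k := trunc_log 2 (n %/ f) in lo hi.
have lt_n : n < f * 2 ^ k.+1.
  by apply: leq_trans (ltn_ceil n f0) _; rewrite [_ * f]mulnC leq_mul2l hi orbT.
exists k; last rewrite lt_n andbT.
  rewrite -ltnS; apply: (@ltn_pexp2l 2) => //; rewrite -(ltn_pmul2l f0).
  by apply: leq_ltn_trans _ lt_n; rewrite mulnC.
by apply: leq_trans (leq_divM n f); rewrite [_ * f]mulnC leq_mul2l lo orbT.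
Qed.

Section Logarithm.
Local Open Scope R_scope.

Lemma INR_expn (m k : nat) : INR (m ^ k)%N = INR m ^ k.
Proof. by elim: k => [//|k IH]; rewrite expnS mult_INR IH. Qed.

Lemma INR_le_log2_div (k n f : nat) : (0 < f)%N -> (f * 2 ^ k <= n)%N ->
  INR k <= log2 (INR n / INR f).
Proof.
move=> f0 le_n.
have f0R : 0 < INR f by apply/lt_0_INR/ltP.
have pow_le : 2 ^ k <= INR n / INR f.
  apply: (Rmult_le_reg_l (INR f)) => //.
  rewrite Rmult_div_assoc Rmult_div_r; last lra.
  by have := le_INR _ _ (elimT leP le_n); rewrite mult_INR INR_expn.
have ln2 : 0 < ln 2 by rewrite -ln_1; apply: ln_increasing; lra.
rewrite /log2; apply: (Rmult_le_reg_r (ln 2)) => //.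
rewrite /Rdiv Rmult_assoc Rinv_l ?Rmult_1_r -?ln_pow; try lra.
case: (Rle_lt_or_eq_dec _ _ pow_le) => [lt|->]; last lra.
by apply/Rlt_le/ln_increasing => //; apply: pow_lt; lra.
Qed.

Lemma size_separated_seq_log (T : finType) (s : seq {set T}) f :
  edges_ok s -> (1 <= f)%N -> (8 * f <= #|T|)%N -> separated_seq f s ->
  INR (size s) <= 2 * INR f * INR #|T| * log2 (INR #|T| / INR f).
Proof.
move=> ok_s f0 large sep_s.
have [k k3 /andP [le_n lt_n]] := exists_pow2_bracket f0 large.
have size_lt : (size s < (f * k.+2).+1 * #|T|)%N.
  rewrite -cardsT; apply: size_separated_seq ok_s _ sep_s; rewrite ?cardsT //.
  - by lia.
  - exact: ltnW.
  - by apply/allP => e _; apply: subsetT.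
have size_le : (size s <= 2 * f * #|T| * k)%N by nia.
apply: Rle_trans (le_INR _ _ (elimT leP size_le)) _.
rewrite !mult_INR; apply: Rmult_le_compat_l; last exact: INR_le_log2_div le_n.
by apply: Rmult_le_pos; [apply: Rmult_le_pos; [simpl; lra|] |]; apply: pos_INR.
Qed.

End Logarithm.

Theorem mainTheorem4 :
  exists C : R,
    (forall (T : finType) (es : seq {set T}) (f : nat),
        edges_ok es -> (1 <= f)%N -> (10 * f < #|T|)%N ->
        has_MFD_blocking_set es f ->
        Rle (INR (size es)) (Rmult (Rmult (Rmult C (INR f)) (INR #|T|)) (log2 (Rdiv (INR #|T|) (INR f)))))
    /\
    (forall (T : finType) (es : seq {set T}) (f : nat),
        edges_ok es -> (1 <= f)%N -> (10 * f < #|T|)%N ->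
        Rle (INR (size (FTGreedyMFDCertificate es f)))
            (Rmult (Rmult (Rmult C (INR f)) (INR #|T|)) (log2 (Rdiv (INR #|T|) (INR f))))).
Proof.
exists (2 : R); split=> T es f ok_es f0 large.
  move=> /(separated_seq_blocking ok_es) sep_es.
  by apply: size_separated_seq_log => //; lia.
apply: size_separated_seq_log => //.
- exact: edges_ok_subseq (greedy_subseq _ _ _) ok_es.
- by lia.
- exact: greedy_separated.
Qed.
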